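(* Let $R>1$ and, in the upper half-plane model, let $\ell$ have endpoints $\pm R^{-1}$ (transversely oriented towards $0$) and $\ell'$ have endpoints $\pm R$ (transversely oriented towards $\infty$). For $\epsilon\in\{1,-1\}$ and $t\in\mathbb{R}$ let $$P_\epsilon(t)=\begin{bmatrix}1-t & -\epsilon R^{-1}t\\ \epsilon Rt & 1+t\end{bmatrix},\qquad P'_\epsilon(t)=\begin{bmatrix}1+t & -\epsilon Rt\\ \epsilon R^{-1}t & 1-t\end{bmatrix}\in G_0.$$ Let $h\in G_0$ be represented by $\begin{pmatrix}a&b\\c&d\end{pmatrix}$ with $ad-bc=1$, and suppose $|aR+\varepsilon' b+\varepsilon c+\varepsilon\varepsilon' dR^{-1}|<|R+\varepsilon\varepsilon' R^{-1}|$ for all $\varepsilon,\varepsilon'\in\{1,-1\}$, and that $h$ is not represented by a diagonal matrix. Then at least one of the following holds: one of the curves $(hP'_+(t))_{t>0}$, $(hP'_-(t))_{t>0}$ intersects $\mathsf{SQ}(\ell)$ transversely, or one of the curves $(P_+(t)^{-1}h)_{t>0}$, $(P_-(t)^{-1}h)_{t>0}$ intersects $\mathsf{SQ}(\ell')^{-1}$ transversely.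
   Context: $G_0=\mathrm{PSL}_2(\mathbb{R})$ (a $3$-manifold, identified with $\mathrm{AdS}^3$) acts on the upper half-plane by Möbius transformations; $[\cdot]$ denotes the class of a matrix. For a transversely oriented geodesic line $\ell$, the stem quadrant $\mathsf{SQ}(\ell)\subset G_0$ is the set of hyperbolic elements whose translation axis is orthogonal to $\ell$ and which translate towards the positive side of $\ell$; it is a $2$-dimensional surface in $G_0$. $\mathsf{SQ}(\ell')^{-1}=\{h^{-1}:h\in\mathsf{SQ}(\ell')\}$. Transverse intersection is meant in the sense of a curve meeting a surface transversely in $G_0$. *)

From Stdlib Require Import Reals.
Open Scope R_scope.

(** G_0 = PSL_2(R) is represented through SL_2(R):
    a subset of G_0 is represented by its (sign-invariant) preimage in SL_2(R),
    and curves in G_0 by (continuous) lifts to SL_2(R) ⊂ R^4. *)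
Record M2 := mkM2 { m11 : R; m12 : R; m21 : R; m22 : R }.

Definition mdet (M : M2) : R := m11 M * m22 M - m12 M * m21 M.
Definition mtr (M : M2) : R := m11 M + m22 M.

Definition mmul (M N : M2) : M2 :=
  mkM2 (m11 M * m11 N + m12 M * m21 N) (m11 M * m12 N + m12 M * m22 N)
       (m21 M * m11 N + m22 M * m21 N) (m21 M * m12 N + m22 M * m22 N).

Definition minv (M : M2) : M2 :=
  mkM2 (m22 M / mdet M) (- m12 M / mdet M) (- m21 M / mdet M) (m11 M / mdet M).

Definition inH (p : R * R) : Prop := 0 < snd p.

(** Möbius action z |-> (a z + b)/(c z + d), in real coordinates z = x + i y. *)
Definition mobius (M : M2) (p : R * R) : R * R :=
  let x := fst p in let y := snd p in
  let D := (m21 M * x + m22 M) ^ 2 + (m21 M * y) ^ 2 in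
  (((m11 M * x + m12 M) * (m21 M * x + m22 M) + m11 M * m21 M * y ^ 2) / D,
   mdet M * y / D).

(** Geodesic lines of the upper half-plane: semicircles centred on the real
    axis (centre m, radius r > 0) and vertical half-lines (at abscissa m). *)
Inductive geod : Type :=
| Semi (m r : R)
| Vert (m : R).

Definition on_geod (g : geod) (p : R * R) : Prop :=
  inH p /\
  match g with
  | Semi m r => (fst p - m) ^ 2 + snd p ^ 2 = r ^ 2
  | Vert m => fst p = m
  end.

(** A (Euclidean, hence hyperbolic, the model being conformal) tangent
    direction of the geodesic g at a point p of g. *)
Definition tangent_dir (g : geod) (p : R * R) : R * R :=
  match g with
  | Semi m r => (snd p, - (fst p - m))
  | Vert m => (0, 1)
  end.

Definition orth_at (g g' : geod) (p : R * R) : Prop :=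
  on_geod g p /\ on_geod g' p /\
  fst (tangent_dir g p) * fst (tangent_dir g' p)
  + snd (tangent_dir g p) * snd (tangent_dir g' p) = 0.

(** Boundary points ∂H = R ∪ {∞}: [Some x] is x, [None] is ∞. *)
Definition fixes_bd (M : M2) (q : option R) : Prop :=
  match q with
  | Some x => m21 M * x + m22 M <> 0 /\
              m11 M * x + m12 M = x * (m21 M * x + m22 M)
  | None => m21 M = 0
  end.

Definition endpoints (g : geod) : option R * option R :=
  match g with
  | Semi m r => (Some (m - r), Some (m + r))
  | Vert m => (Some m, None)
  end.

Definition hyperbolic (M : M2) : Prop := 2 < Rabs (mtr M).

Definition is_axis (M : M2) (g : geod) : Prop :=
  hyperbolic M /\
  (match g with Semi _ r => 0 < r | Vert _ => True end) /\
  fixes_bd M (fst (endpoints g)) /\ fixes_bd M (snd (endpoints g)).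

(** Stem quadrant of the transversely oriented geodesic (l, pos), where pos
    is the positive side (open half-plane bounded by l); given as the
    preimage in SL_2(R). *)
Definition SQ (l : geod) (pos : R * R -> Prop) (M : M2) : Prop :=
  mdet M = 1 /\ hyperbolic M /\
  exists g p, is_axis M g /\ orth_at g l p /\ pos (mobius M p).

Definition SQinv (l : geod) (pos : R * R -> Prop) (M : M2) : Prop :=
  exists N, SQ l pos N /\ M = minv N.

Definition has_deriv (gam : R -> M2) (t : R) (v : M2) : Prop :=
  derivable_pt_lim (fun s => m11 (gam s)) t (m11 v) /\
  derivable_pt_lim (fun s => m12 (gam s)) t (m12 v) /\
  derivable_pt_lim (fun s => m21 (gam s)) t (m21 v) /\
  derivable_pt_lim (fun s => m22 (gam s)) t (m22 v).

Definition tangent_vec (S : M2 -> Prop) (p v : M2) : Prop :=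
  exists (sig : R -> M2) (delta : R), 0 < delta /\ sig 0 = p /\
    (forall s, Rabs s < delta -> S (sig s)) /\ has_deriv sig 0 v.

Definition meets_transversely (gam : R -> M2) (S : M2 -> Prop) : Prop :=
  exists t0 v, 0 < t0 /\ S (gam t0) /\ has_deriv gam t0 v /\
    ~ tangent_vec S (gam t0) v.

Definition ell (Rr : R) : geod := Semi 0 (/ Rr).
Definition ell_pos (Rr : R) (p : R * R) : Prop :=
  fst p ^ 2 + snd p ^ 2 < (/ Rr) ^ 2.          (* towards 0 *)
Definition ell' (Rr : R) : geod := Semi 0 Rr.
Definition ell'_pos (Rr : R) (p : R * R) : Prop :=
  Rr ^ 2 < fst p ^ 2 + snd p ^ 2.              (* towards ∞ *)

Definition Pm (Rr e t : R) : M2 :=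
  mkM2 (1 - t) (- e * / Rr * t) (e * Rr * t) (1 + t).
Definition Pm' (Rr e t : R) : M2 :=
  mkM2 (1 + t) (- e * Rr * t) (e * / Rr * t) (1 - t).

From Stdlib Require Import Reals Lra Psatz FunctionalExtensionality.
Open Scope R_scope.

(* Both families of curves are affine in t, h P'_e(t) = h + t h N_e and
   P_e(t)^-1 h = h + t N'_e h, and the stem quadrant of a geodesic of radius
   rho centred at 0 lies in the hyperplane m12 + rho^2 m21 = 0.  Such a curve
   therefore crosses the hyperplane once, transversely, at a positive time
   exactly when the linear form takes opposite signs at h and at the velocity;
   summing over e shows this happens for one of the four curves unless
   b = c = 0.  Two of the four bounded quantities a R + e' b + e c + e e' d / R
   stay constant along each curve, and at the crossing they force the matrix
   to be hyperbolic with tr * (d - a) > 0, which puts it in the stem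
   quadrant. *)

Definition mid : M2 := mkM2 1 0 0 1.

Definition maff (M V : M2) (t : R) : M2 :=
  mkM2 (m11 M + t * m11 V) (m12 M + t * m12 V)
       (m21 M + t * m21 V) (m22 M + t * m22 V).

Lemma mdet_mmul (M N : M2) : mdet (mmul M N) = mdet M * mdet N.
Proof. unfold mdet, mmul; simpl; ring. Qed.

Lemma mmul_mid_l (M : M2) : mmul mid M = M.
Proof. destruct M; unfold mmul, mid; simpl; f_equal; ring. Qed.

Lemma mmul_mid_r (M : M2) : mmul M mid = M.
Proof. destruct M; unfold mmul, mid; simpl; f_equal; ring. Qed.

Lemma mmul_maff_l (M N V : M2) (t : R) :
  mmul M (maff N V t) = maff (mmul M N) (mmul M V) t.
Proof. unfold mmul, maff; simpl; f_equal; ring. Qed.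

Lemma mmul_maff_r (M N V : M2) (t : R) :
  mmul (maff N V t) M = maff (mmul N M) (mmul V M) t.
Proof. unfold mmul, maff; simpl; f_equal; ring. Qed.

Lemma derivable_pt_lim_affine (a b x : R) :
  derivable_pt_lim (fun s => a + s * b) x b.
Proof.
  intros eps Heps. exists (mkposreal 1 Rlt_0_1). intros h Hh _.
  replace ((a + (x + h) * b - (a + x * b)) / h - b) with 0 by (field; exact Hh).
  rewrite Rabs_R0. exact Heps.
Qed.

Lemma derivable_pt_lim_locally_zero (f : R -> R) (del : R) :
  0 < del -> (forall s, Rabs s < del -> f s = 0) -> derivable_pt_lim f 0 0.
Proof.
  intros Hdel Hf eps Heps. exists (mkposreal del Hdel). intros h Hh Hhdel.
  rewrite (Hf (0 + h)) by (rewrite Rplus_0_l; exact Hhdel).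
  rewrite (Hf 0) by (rewrite Rabs_R0; exact Hdel).
  replace ((0 - 0) / h - 0) with 0 by (field; exact Hh).
  rewrite Rabs_R0. exact Heps.
Qed.

Lemma has_deriv_maff (M V : M2) (t : R) : has_deriv (maff M V) t V.
Proof. repeat split; apply derivable_pt_lim_affine. Qed.

(** * Transverse crossings of a hyperplane *)

Definition stem_form (k : R) (M : M2) : R := m12 M + k * m21 M.

Lemma stem_form_maff (k : R) (M V : M2) (t : R) :
  stem_form k (maff M V t) = stem_form k M + t * stem_form k V.
Proof. unfold stem_form, maff; simpl; ring. Qed.

Lemma not_tangent_vec_stem_form (S : M2 -> Prop) (k : R) (M V : M2) :
  (forall N, S N -> stem_form k N = 0) -> stem_form k V <> 0 -> ~ tangent_vec S M V.
Proof.
  intros HS HV [sig [del [Hdel [_ [Hin [_ [D12 [D21 _]]]]]]]].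
  apply HV. unfold stem_form.
  apply (uniqueness_limite (fun s => m12 (sig s) + k * m21 (sig s)) 0).
  - apply (derivable_pt_lim_plus (fun s => m12 (sig s)) (fun s => k * m21 (sig s))); [exact D12|].
    apply (derivable_pt_lim_scal (fun s => m21 (sig s))). exact D21.
  - apply (derivable_pt_lim_locally_zero _ del Hdel). intros s Hs. exact (HS _ (Hin s Hs)).
Qed.

Lemma meets_transversely_affine (S : M2 -> Prop) (k : R) (gam : R -> M2) (M V : M2) :
  (forall t, gam t = maff M V t) ->
  (forall N, S N -> stem_form k N = 0) ->
  stem_form k M * stem_form k V < 0 ->
  (forall t, stem_form k (gam t) = 0 -> S (gam t)) ->
  meets_transversely gam S.
Proof.
  intros Hgam HS Hsign Hmem.
  replace gam with (maff M V) in * by (extensionality t; symmetry; apply Hgam).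
  set (F0 := stem_form k M) in *. set (s := stem_form k V) in *.
  assert (Hs : s <> 0) by (intro E; rewrite E in Hsign; lra).
  exists (- F0 / s), V. split; [|split; [|split]].
  - replace (- F0 / s) with (- (F0 * s) / (s * s)) by (field; exact Hs).
    apply Rdiv_lt_0_compat; [lra|]. apply Rsqr_pos_lt, Hs.
  - apply Hmem. rewrite stem_form_maff. fold F0 s. field. exact Hs.
  - apply has_deriv_maff.
  - apply (not_tangent_vec_stem_form _ k); assumption.
Qed.

(** * Stem quadrants of the geodesics centred at 0 *)

Lemma fixed_points_vieta (A B C D z1 z2 : R) :
  z1 <> z2 -> A * z1 + B = z1 * (C * z1 + D) -> A * z2 + B = z2 * (C * z2 + D) ->
  B = - (C * z1 * z2).
Proof.
  intros Hz E1 E2.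
  assert (EA : A = C * (z1 + z2) + D).
  { apply (Rmult_eq_reg_r (z1 - z2)); [|lra]. nra. }
  rewrite EA in E1. nra.
Qed.

(* Orthogonality to the circle of radius rho makes the product m^2 - r^2 of
   the fixed points m -/+ r equal to rho^2. *)
Lemma SQ_semi0_stem_form (rho : R) (pos : R * R -> Prop) (N : M2) :
  SQ (Semi 0 rho) pos N -> stem_form (rho ^ 2) N = 0.
Proof.
  intros [_ [_ [g [[x y] [[_ [Hr [Hf1 Hf2]]] [[Hg [Hl Ht]] _]]]]]].
  destruct N as [A B C D]; unfold stem_form; simpl in *.
  destruct g as [m r | m]; simpl in *.
  - destruct Hf1 as [_ E1], Hf2 as [_ E2], Hg as [_ Hg], Hl as [_ Hl]; simpl in *.
    assert (Hrho : rho ^ 2 = m * x) by nra.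
    assert (Hr2 : r ^ 2 = m ^ 2 - rho ^ 2) by nra.
    rewrite (fixed_points_vieta A B C D (m - r) (m + r) ltac:(lra) E1 E2).
    replace (C * (m - r) * (m + r)) with (C * (m ^ 2 - r ^ 2)) by ring.
    rewrite Hr2. ring.
  - destruct Hf1 as [_ E1], Hg as [_ Hg], Hl as [_ Hl]; simpl in *.
    assert (m = 0) by lra. subst. nra.
Qed.

Lemma SQinv_semi0_stem_form (rho : R) (pos : R * R -> Prop) (N : M2) :
  SQinv (Semi 0 rho) pos N -> stem_form (rho ^ 2) N = 0.
Proof.
  intros [N' [HN' ->]].
  pose proof (SQ_semi0_stem_form _ _ _ HN') as HF. destruct HN' as [Hdet _].
  unfold stem_form, minv in *; simpl. rewrite Hdet. lra.
Qed.

Lemma pow2_gt_0 (x : R) : x <> 0 -> 0 < x ^ 2.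
Proof. intro Hx. rewrite <- Rsqr_pow2. apply Rsqr_pos_lt, Hx. Qed.

Lemma mobius_norm2 (M : M2) (x y : R) :
  mdet M = 1 -> 0 < (m21 M * x + m22 M) ^ 2 + (m21 M * y) ^ 2 ->
  fst (mobius M (x, y)) ^ 2 + snd (mobius M (x, y)) ^ 2
  = ((m11 M * x + m12 M) ^ 2 + (m11 M * y) ^ 2)
    / ((m21 M * x + m22 M) ^ 2 + (m21 M * y) ^ 2).
Proof.
  destruct M as [A B C D]. unfold mobius, mdet; simpl. intros Hdet Hpos.
  rewrite Hdet. field_simplify_eq; [|lra].
  match goal with |- ?L = ?R =>
    assert (E : L - R = (1 - (A * D - B * C) ^ 2) * y ^ 2) by ring end.
  rewrite Hdet in E. lra.
Qed.

Lemma fixes_bd_of_discriminant (A B C D z : R) :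
  A * D - B * C = 1 -> C <> 0 -> (2 * C * z + D - A) ^ 2 = (A + D) ^ 2 - 4 ->
  fixes_bd (mkM2 A B C D) (Some z).
Proof.
  intros Hdet HC Hz. simpl. split.
  - intro E. replace (2 * C * z + D - A) with (- (A + D)) in Hz by lra. lra.
  - assert (E : 4 * C * (C * z ^ 2 + (D - A) * z - B) = 0) by nra.
    apply Rmult_integral in E as [E | E]; lra.
Qed.

(* The fixed points m -/+ r are the roots of c z^2 + (d - a) z + rho^2 c; their
   product rho^2 = m^2 - r^2 makes the axis orthogonal to the circle. *)
Lemma semicircle_axis_orthogonal (rho A B C D : R) :
  0 < rho -> A * D - B * C = 1 -> B + rho ^ 2 * C = 0 -> 2 < Rabs (A + D) -> C <> 0 ->
  exists g x y, is_axis (mkM2 A B C D) g /\ orth_at g (Semi 0 rho) (x, y) /\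
    (D - A + 2 * C * x) * (D - A) = (A + D) ^ 2 - 4.
Proof.
  intros Hrho Hdet HB HT HC.
  assert (HT2 : 4 < (A + D) ^ 2) by (rewrite <- (pow2_abs (A + D)); nra).
  assert (HC2 : 0 < C ^ 2) by (apply pow2_gt_0, HC).
  set (w := D - A).
  assert (Hdisc : (A + D) ^ 2 - 4 = w ^ 2 - 4 * rho ^ 2 * C ^ 2) by (unfold w; nra).
  set (r := sqrt (((A + D) ^ 2 - 4) / (4 * C ^ 2))).
  assert (Hr0 : 0 < r) by (apply sqrt_lt_R0, Rdiv_lt_0_compat; lra).
  assert (Hr2 : 4 * C ^ 2 * r ^ 2 = (A + D) ^ 2 - 4).
  { unfold r. rewrite pow2_sqrt by (apply Rlt_le, Rdiv_lt_0_compat; lra). field. lra. }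
  set (m := - w / (2 * C)).
  assert (Hm : 2 * C * m = - w) by (unfold m; field; exact HC).
  assert (Hmr : m ^ 2 = r ^ 2 + rho ^ 2).
  { apply (Rmult_eq_reg_l (4 * C ^ 2)); [|lra].
    replace (4 * C ^ 2 * m ^ 2) with ((2 * C * m) ^ 2) by ring. rewrite Hm. nra. }
  assert (Hm0 : m <> 0) by (intro E; rewrite E in Hmr; nra).
  set (x := rho ^ 2 / m).
  assert (Hx : x * m = rho ^ 2) by (unfold x; field; exact Hm0).
  assert (Hx2 : x ^ 2 < rho ^ 2).
  { assert (E : x ^ 2 * m ^ 2 = rho ^ 2 * rho ^ 2) by (rewrite <- Hx; ring).
    assert (Hrho2 : 0 < rho ^ 2) by (apply pow_lt, Hrho).
    apply (Rmult_lt_reg_r (m ^ 2)); [apply pow2_gt_0, Hm0|]. rewrite E.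
    apply Rmult_lt_compat_l; [exact Hrho2|].
    rewrite Hmr. assert (0 < r ^ 2) by (apply pow_lt, Hr0). lra. }
  set (y := sqrt (rho ^ 2 - x ^ 2)).
  assert (Hy0 : 0 < y) by (apply sqrt_lt_R0; lra).
  assert (Hy2 : y ^ 2 = rho ^ 2 - x ^ 2) by (unfold y; rewrite pow2_sqrt; lra).
  exists (Semi m r), x, y. split; [|split].
  - split; [exact HT|]. split; [exact Hr0|].
    unfold w in Hm.
    split; apply fixes_bd_of_discriminant; try assumption; rewrite <- Hr2.
    + replace (2 * C * (m - r) + D - A) with (- (2 * C * r)) by lra. ring.
    + replace (2 * C * (m + r) + D - A) with (2 * C * r) by lra. ring.
  - unfold orth_at, on_geod, inH; simpl. repeat split; try lra; nra.
  - fold w. rewrite Hdisc. unfold w in *. nra.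
Qed.

Lemma axis_orthogonal_exists (rho A B C D : R) :
  0 < rho -> A * D - B * C = 1 -> B + rho ^ 2 * C = 0 -> 2 < Rabs (A + D) ->
  exists g x y, is_axis (mkM2 A B C D) g /\ orth_at g (Semi 0 rho) (x, y) /\
    (D - A + 2 * C * x) * (D - A) = (A + D) ^ 2 - 4.
Proof.
  intros Hrho Hdet HB HT.
  destruct (Req_dec C 0) as [HC | HC];
    [| exact (semicircle_axis_orthogonal rho A B C D Hrho Hdet HB HT HC)].
  assert (HB0 : B = 0) by (subst; lra). subst.
  exists (Vert 0), 0, rho.
  unfold is_axis, orth_at, on_geod, inH; simpl.
  repeat split; try exact HT; try lra; nra.
Qed.

Lemma SQ_semi0_witness (rho : R) (M : M2) :
  0 < rho -> mdet M = 1 -> stem_form (rho ^ 2) M = 0 -> 2 < Rabs (mtr M) ->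
  exists g p, is_axis M g /\ orth_at g (Semi 0 rho) p /\
    (fst (mobius M p) ^ 2 + snd (mobius M p) ^ 2 - rho ^ 2)
      * (mtr M * (m22 M - m11 M)) < 0.
Proof.
  intros Hrho Hdet HB HT.
  destruct M as [A B C D]; unfold mdet, stem_form, mtr in *; simpl in Hdet, HB, HT.
  destruct (axis_orthogonal_exists rho A B C D Hrho Hdet HB HT)
    as [g [x [y [Hax [Horth Hw]]]]].
  exists g, (x, y). split; [exact Hax|]. split; [exact Horth|].
  destruct Horth as [_ [[Hy Hcirc] _]]; unfold inH in Hy; simpl in Hy, Hcirc.
  assert (HT2 : 4 < (A + D) ^ 2) by (rewrite <- (pow2_abs (A + D)); nra).
  set (Den := (C * x + D) ^ 2 + (C * y) ^ 2).
  assert (HDen : 0 < Den).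
  { destruct (Req_dec C 0) as [HC | HC].
    - subst. unfold Den. assert (D <> 0) by (intro; subst; lra).
      replace ((0 * x + D) ^ 2 + (0 * y) ^ 2) with (D ^ 2) by ring. apply pow2_gt_0; assumption.
    - assert (0 < (C * y) ^ 2) by (apply pow2_gt_0, Rmult_integral_contrapositive; lra).
      assert (0 <= (C * x + D) ^ 2) by apply pow2_ge_0. unfold Den. lra. }
  rewrite mobius_norm2 by (exact Hdet || exact HDen). cbn [m11 m12 m21 m22 mtr]. fold Den.
  assert (Hgap : (A * x + B) ^ 2 + (A * y) ^ 2 - rho ^ 2 * Den
                 = - rho ^ 2 * (A + D) * (D - A + 2 * C * x)).
  { unfold Den. replace B with (- (rho ^ 2 * C)) by lra.
    replace ((A * y) ^ 2) with (A ^ 2 * y ^ 2) by ring.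
    replace ((C * y) ^ 2) with (C ^ 2 * y ^ 2) by ring.
    replace (y ^ 2) with (rho ^ 2 - x ^ 2) by lra. ring. }
  replace ((((A * x + B) ^ 2 + (A * y) ^ 2) / Den - rho ^ 2) * ((A + D) * (D - A)))
    with (((A * x + B) ^ 2 + (A * y) ^ 2 - rho ^ 2 * Den) * (A + D) * (D - A) / Den)
    by (field; lra).
  rewrite Hgap.
  replace (- rho ^ 2 * (A + D) * (D - A + 2 * C * x) * (A + D) * (D - A))
    with (- (rho ^ 2 * (A + D) ^ 2 * ((D - A + 2 * C * x) * (D - A)))) by ring.
  rewrite Hw. unfold Rdiv. rewrite Ropp_mult_distr_l_reverse. apply Ropp_lt_gt_0_contravar.
  apply Rmult_lt_0_compat; [|apply Rinv_0_lt_compat, HDen].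
  apply Rmult_lt_0_compat; [apply Rmult_lt_0_compat; [apply pow_lt, Hrho | lra] | lra].
Qed.

Lemma SQ_inside_of_trace (rho : R) (M : M2) :
  0 < rho -> mdet M = 1 -> stem_form (rho ^ 2) M = 0 -> 2 < Rabs (mtr M) ->
  0 < mtr M * (m22 M - m11 M) ->
  SQ (Semi 0 rho) (fun p => fst p ^ 2 + snd p ^ 2 < rho ^ 2) M.
Proof.
  intros Hrho Hdet HF HT Hsign.
  destruct (SQ_semi0_witness rho M Hrho Hdet HF HT) as [g [p [Hax [Horth Hgap]]]].
  split; [exact Hdet|]. split; [exact HT|].
  exists g, p. split; [exact Hax|]. split; [exact Horth|]. nra.
Qed.

Lemma SQ_outside_of_trace (rho : R) (M : M2) :
  0 < rho -> mdet M = 1 -> stem_form (rho ^ 2) M = 0 -> 2 < Rabs (mtr M) ->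
  mtr M * (m22 M - m11 M) < 0 ->
  SQ (Semi 0 rho) (fun p => rho ^ 2 < fst p ^ 2 + snd p ^ 2) M.
Proof.
  intros Hrho Hdet HF HT Hsign.
  destruct (SQ_semi0_witness rho M Hrho Hdet HF HT) as [g [p [Hax [Horth Hgap]]]].
  split; [exact Hdet|]. split; [exact HT|].
  exists g, p. split; [exact Hax|]. split; [exact Horth|]. nra.
Qed.

Lemma SQinv_outside_of_trace (rho : R) (M : M2) :
  0 < rho -> mdet M = 1 -> stem_form (rho ^ 2) M = 0 -> 2 < Rabs (mtr M) ->
  0 < mtr M * (m22 M - m11 M) ->
  SQinv (Semi 0 rho) (fun p => rho ^ 2 < fst p ^ 2 + snd p ^ 2) M.
Proof.
  destruct M as [A B C D]; unfold mdet, stem_form, mtr; simpl. intros Hrho Hdet HF HT Hsign.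
  exists (mkM2 D (- B) (- C) A). split.
  - apply SQ_outside_of_trace; unfold mdet, stem_form, mtr; simpl;
      [exact Hrho | lra | lra | rewrite Rplus_comm; exact HT | nra].
  - unfold minv, mdet; simpl. replace (D * A - - B * - C) with 1 by lra.
    f_equal; field.
Qed.

(** * Hyperbolicity from the bounds of the hypothesis *)

(* With X := p T - q u and Y := q T - p v, the relation u v = T^2 - 4 reads
   T (p Y + q X) = X Y + 4 p q, and X Y + 4 p q -/+ 2 (p Y + q X)
   = (2 p -/+ X) (2 q -/+ Y) > 0. *)
Lemma trace_gt_two_of_bounds (p q T u v : R) :
  0 < p -> 0 < q -> Rabs (p * T - q * u) < 2 * p -> Rabs (q * T - p * v) < 2 * q ->
  u * v = T ^ 2 - 4 -> 2 < Rabs T /\ 0 < T * (u + v).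
Proof.
  intros Hp Hq HX HY Huv.
  set (X := p * T - q * u) in HX. set (Y := q * T - p * v) in HY.
  apply Rabs_def2 in HX as [HX1 HX2]. apply Rabs_def2 in HY as [HY1 HY2].
  assert (E : T * (p * Y + q * X) = X * Y + 4 * p * q).
  { unfold X, Y. replace (4 * p * q) with (p * q * (T ^ 2 - u * v)) by (rewrite Huv; ring). ring. }
  assert (Hm : 0 < (2 * p - X) * (2 * q - Y)) by (apply Rmult_lt_0_compat; lra).
  assert (Hl : 0 < (2 * p + X) * (2 * q + Y)) by (apply Rmult_lt_0_compat; lra).
  assert (HT : 2 < Rabs T).
  { destruct (Rle_or_lt 0 T) as [HT0 | HT0];
      [rewrite Rabs_right by lra | rewrite Rabs_left by lra]; nra. }
  split; [exact HT|].
  assert (Huv0 : 0 < u * v) by (rewrite Huv, <- (pow2_abs T); nra).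
  unfold X in HX1, HX2.
  destruct (Rle_or_lt 0 T) as [HT0 | HT0].
  - rewrite Rabs_right in HT by lra.
    assert (Hu : 0 < u).
    { apply (Rmult_lt_reg_l q); [exact Hq|]. rewrite Rmult_0_r.
      assert (0 < p * (T - 2)) by (apply Rmult_lt_0_compat; lra). lra. }
    assert (0 < v) by nra. nra.
  - rewrite Rabs_left in HT by lra.
    assert (Hu : u < 0).
    { apply (Rmult_lt_reg_l q); [exact Hq|]. rewrite Rmult_0_r.
      assert (p * (T + 2) < 0) by (apply Rmult_pos_neg; lra). lra. }
    assert (v < 0) by nra. nra.
Qed.

(* [qform Rr e e' M] is the pairing (Rr, e) M (1, e'/Rr)^T; it is the
   quantity bounded in the hypothesis of the theorem. *)
Definition qform (Rr e e' : R) (M : M2) : R :=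
  m11 M * Rr + e' * m12 M + e * m21 M + e * e' * m22 M * / Rr.

Definition mtrans (M : M2) : M2 := mkM2 (m11 M) (m21 M) (m12 M) (m22 M).

Lemma Rabs_plus_sign_inv (Rr s : R) :
  1 < Rr -> (s = 1 \/ s = -1) -> Rabs (Rr + s * / Rr) = Rr + s * / Rr.
Proof.
  intros HR Hs. apply Rabs_right.
  assert (/ Rr < 1) by (rewrite <- Rinv_1; apply Rinv_lt_contravar; lra).
  assert (0 < / Rr) by (apply Rinv_0_lt_compat; lra).
  destruct Hs as [-> | ->]; lra.
Qed.

Lemma trace_of_qform_in (Rr e : R) (M : M2) :
  1 < Rr -> (e = 1 \/ e = -1) -> mdet M = 1 -> stem_form ((/ Rr) ^ 2) M = 0 ->
  (forall e1, (e1 = 1 \/ e1 = -1) ->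
     Rabs (qform Rr e1 e M) < Rabs (Rr + e1 * e * / Rr)) ->
  2 < Rabs (mtr M) /\ 0 < mtr M * (m22 M - m11 M).
Proof.
  intros HR He Hdet HF HQ.
  assert (HR0 : Rr <> 0) by lra.
  assert (Hee : e * e = 1) by (destruct He as [-> | ->]; ring).
  assert (Hopp : - e = 1 \/ - e = -1) by (destruct He as [-> | ->]; [right | left]; ring).
  pose proof (HQ e He) as Hplus. pose proof (HQ (- e) Hopp) as Hminus.
  replace (- e * e) with (-1) in Hminus by (destruct He as [-> | ->]; ring). rewrite Hee in Hplus.
  rewrite Rabs_plus_sign_inv in Hplus, Hminus by first [lra | now left | now right].
  destruct M as [A B C D]; unfold mdet, stem_form, mtr, qform in *; simpl in *.
  assert (HB : B = - (C * (/ Rr) ^ 2)) by lra.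
  destruct (trace_gt_two_of_bounds (Rr ^ 2 + 1) (Rr ^ 2 - 1) (A + D)
              (D - A - 2 * e * C / Rr) (D - A + 2 * e * C / Rr)) as [HT Hsign].
  - nra.
  - nra.
  - replace ((Rr ^ 2 + 1) * (A + D) - (Rr ^ 2 - 1) * (D - A - 2 * e * C / Rr))
      with (2 * Rr * (A * Rr + e * B + e * C + e * e * D * / Rr))
      by (rewrite HB; destruct He as [-> | ->]; field; exact HR0).
    rewrite Rabs_mult, (Rabs_right (2 * Rr)) by lra.
    apply Rlt_le_trans with (2 * Rr * (Rr + 1 * / Rr));
      [apply Rmult_lt_compat_l; [lra | exact Hplus] | right; field; exact HR0].
  - replace ((Rr ^ 2 - 1) * (A + D) - (Rr ^ 2 + 1) * (D - A + 2 * e * C / Rr))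
      with (2 * Rr * (A * Rr + e * B + - e * C + - e * e * D * / Rr))
      by (rewrite HB; destruct He as [-> | ->]; field; exact HR0).
    rewrite Rabs_mult, (Rabs_right (2 * Rr)) by lra.
    apply Rlt_le_trans with (2 * Rr * (Rr + -1 * / Rr));
      [apply Rmult_lt_compat_l; [lra | exact Hminus] | right; field; exact HR0].
  - transitivity ((D - A) ^ 2 + 4 * B * C); [|nra].
    rewrite HB. destruct He as [-> | ->]; field; exact HR0.
  - split; [exact HT | nra].
Qed.

Lemma trace_of_qform_out (Rr e : R) (M : M2) :
  1 < Rr -> (e = 1 \/ e = -1) -> mdet M = 1 -> stem_form (Rr ^ 2) M = 0 ->
  (forall e1, (e1 = 1 \/ e1 = -1) ->
     Rabs (qform Rr e e1 M) < Rabs (Rr + e * e1 * / Rr)) ->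
  2 < Rabs (mtr M) /\ 0 < mtr M * (m22 M - m11 M).
Proof.
  intros HR He Hdet HF HQ.
  assert (HR0 : Rr <> 0) by lra.
  apply (trace_of_qform_in Rr e (mtrans M) HR He).
  - unfold mdet, mtrans in *; simpl. lra.
  - unfold stem_form, mtrans in *; simpl.
    replace (m21 M + / Rr * (/ Rr * 1) * m12 M) with ((m12 M + Rr ^ 2 * m21 M) / Rr ^ 2)
      by (field; exact HR0).
    rewrite HF. unfold Rdiv. apply Rmult_0_l.
  - intros e1 He1. replace (e1 * e) with (e * e1) by ring.
    replace (qform Rr e1 e (mtrans M)) with (qform Rr e e1 M)
      by (unfold qform, mtrans; simpl; ring).
    exact (HQ e1 He1).
Qed.

Definition Pm'_vel (Rr e : R) : M2 := mkM2 1 (- e * Rr) (e * / Rr) (-1).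
Definition Pm_inv_vel (Rr e : R) : M2 := mkM2 1 (e * / Rr) (- e * Rr) (-1).

Lemma Pm'_maff (Rr e t : R) : Pm' Rr e t = maff mid (Pm'_vel Rr e) t.
Proof. unfold Pm', maff; simpl; f_equal; ring. Qed.

Lemma mdet_Pm' (Rr e t : R) : Rr <> 0 -> (e = 1 \/ e = -1) -> mdet (Pm' Rr e t) = 1.
Proof. intros HR He. unfold mdet, Pm'; simpl. destruct He as [-> | ->]; field; exact HR. Qed.

Lemma minv_Pm_maff (Rr e t : R) : Rr <> 0 -> (e = 1 \/ e = -1) ->
  minv (Pm Rr e t) = maff mid (Pm_inv_vel Rr e) t.
Proof.
  intros HR He.
  assert (Hdet : mdet (Pm Rr e t) = 1).
  { unfold mdet, Pm; simpl. destruct He as [-> | ->]; field; exact HR. }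
  unfold minv. rewrite Hdet. unfold Pm, maff; simpl. f_equal; field; exact HR.
Qed.

Lemma mdet_minv_Pm (Rr e t : R) : Rr <> 0 -> (e = 1 \/ e = -1) ->
  mdet (minv (Pm Rr e t)) = 1.
Proof.
  intros HR He. rewrite minv_Pm_maff by assumption.
  unfold mdet, maff; simpl. destruct He as [-> | ->]; field; exact HR.
Qed.

(* P'_e(t) fixes the column (1, e/Rr) and P_e(t) fixes the row (Rr, e). *)
Lemma qform_mmul_Pm' (Rr e e1 t : R) (M : M2) : Rr <> 0 -> (e = 1 \/ e = -1) ->
  qform Rr e1 e (mmul M (Pm' Rr e t)) = qform Rr e1 e M.
Proof.
  intros HR He. unfold qform, mmul, Pm'; simpl.
  destruct He as [-> | ->]; field; exact HR.
Qed.

Lemma qform_mmul_minv_Pm (Rr e e1 t : R) (M : M2) : Rr <> 0 -> (e = 1 \/ e = -1) ->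
  qform Rr e e1 (mmul (minv (Pm Rr e t)) M) = qform Rr e e1 M.
Proof.
  intros HR He. rewrite minv_Pm_maff by assumption.
  unfold qform, mmul, maff; simpl.
  destruct He as [-> | ->]; field; exact HR.
Qed.

Lemma meets_SQ_along_Pm' (Rr e : R) (h : M2) :
  1 < Rr -> (e = 1 \/ e = -1) -> mdet h = 1 ->
  (forall e1 e2, (e1 = 1 \/ e1 = -1) -> (e2 = 1 \/ e2 = -1) ->
     Rabs (qform Rr e1 e2 h) < Rabs (Rr + e1 * e2 * / Rr)) ->
  stem_form ((/ Rr) ^ 2) h * stem_form ((/ Rr) ^ 2) (mmul h (Pm'_vel Rr e)) < 0 ->
  meets_transversely (fun t => mmul h (Pm' Rr e t)) (SQ (ell Rr) (ell_pos Rr)).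
Proof.
  intros HR He Hdet HQ Hsign. assert (HR0 : Rr <> 0) by lra.
  apply (meets_transversely_affine _ ((/ Rr) ^ 2) _ h (mmul h (Pm'_vel Rr e))).
  - intro t. rewrite Pm'_maff, mmul_maff_l, mmul_mid_r. reflexivity.
  - intros N HN. exact (SQ_semi0_stem_form _ _ _ HN).
  - exact Hsign.
  - intros t HF.
    assert (Hdet_t : mdet (mmul h (Pm' Rr e t)) = 1)
      by (rewrite mdet_mmul, mdet_Pm', Hdet by assumption; ring).
    destruct (trace_of_qform_in Rr e _ HR He Hdet_t HF) as [HT Htw].
    { intros e1 He1. rewrite qform_mmul_Pm' by assumption. exact (HQ e1 e He1 He). }
    apply SQ_inside_of_trace; try assumption. apply Rinv_0_lt_compat; lra.
Qed.

Lemma meets_SQinv_along_Pm (Rr e : R) (h : M2) :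
  1 < Rr -> (e = 1 \/ e = -1) -> mdet h = 1 ->
  (forall e1 e2, (e1 = 1 \/ e1 = -1) -> (e2 = 1 \/ e2 = -1) ->
     Rabs (qform Rr e1 e2 h) < Rabs (Rr + e1 * e2 * / Rr)) ->
  stem_form (Rr ^ 2) h * stem_form (Rr ^ 2) (mmul (Pm_inv_vel Rr e) h) < 0 ->
  meets_transversely (fun t => mmul (minv (Pm Rr e t)) h) (SQinv (ell' Rr) (ell'_pos Rr)).
Proof.
  intros HR He Hdet HQ Hsign. assert (HR0 : Rr <> 0) by lra.
  apply (meets_transversely_affine _ (Rr ^ 2) _ h (mmul (Pm_inv_vel Rr e) h)).
  - intro t. rewrite minv_Pm_maff, mmul_maff_r, mmul_mid_l by assumption. reflexivity.
  - intros N HN. exact (SQinv_semi0_stem_form _ _ _ HN).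
  - exact Hsign.
  - intros t HF.
    assert (Hdet_t : mdet (mmul (minv (Pm Rr e t)) h) = 1)
      by (rewrite mdet_mmul, mdet_minv_Pm, Hdet by assumption; ring).
    destruct (trace_of_qform_out Rr e _ HR He Hdet_t HF) as [HT Htw].
    { intros e1 He1. rewrite qform_mmul_minv_Pm by assumption. exact (HQ e e1 He He1). }
    apply SQinv_outside_of_trace; try assumption. lra.
Qed.

(* Summing over e, [Fin e] gives 2 (c^2 R^-4 - b^2) and [Fout e] gives
   2 (b^2 - R^4 c^2); both sums can be nonnegative only if b = c = 0. *)
Lemma stem_form_sign_change (Rr : R) (h : M2) :
  1 < Rr -> ~ (m12 h = 0 /\ m21 h = 0) ->
  exists e, (e = 1 \/ e = -1) /\
    (stem_form ((/ Rr) ^ 2) h * stem_form ((/ Rr) ^ 2) (mmul h (Pm'_vel Rr e)) < 0 \/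
     stem_form (Rr ^ 2) h * stem_form (Rr ^ 2) (mmul (Pm_inv_vel Rr e) h) < 0).
Proof.
  intros HR Hbc.
  set (Fin e := stem_form ((/ Rr) ^ 2) h * stem_form ((/ Rr) ^ 2) (mmul h (Pm'_vel Rr e))).
  set (Fout e := stem_form (Rr ^ 2) h * stem_form (Rr ^ 2) (mmul (Pm_inv_vel Rr e) h)).
  destruct (Rlt_or_le (Fin 1) 0) as [H | HFin1]; [exists 1; split; [left | left]; auto |].
  destruct (Rlt_or_le (Fin (-1)) 0) as [H | HFin2]; [exists (-1); split; [right | left]; auto |].
  destruct (Rlt_or_le (Fout 1) 0) as [H | HFout1]; [exists 1; split; [left | right]; auto |].
  destruct (Rlt_or_le (Fout (-1)) 0) as [H | HFout2]; [exists (-1); split; [right | right]; auto |].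
  exfalso. apply Hbc.
  destruct h as [a b c d]; simpl.
  set (k := / Rr).
  assert (Hk0 : 0 < k) by (apply Rinv_0_lt_compat; lra).
  assert (Hin : 0 <= (c * k ^ 2) ^ 2 - b ^ 2).
  { enough (Fin 1 + Fin (-1) = 2 * ((c * k ^ 2) ^ 2 - b ^ 2)) by lra.
    unfold Fin, stem_form, mmul, Pm'_vel; simpl. fold k. ring. }
  assert (Hout : 0 <= b ^ 2 - (Rr ^ 2 * c) ^ 2).
  { enough (Fout 1 + Fout (-1) = 2 * (b ^ 2 - (Rr ^ 2 * c) ^ 2)) by lra.
    unfold Fout, stem_form, mmul, Pm_inv_vel; simpl. ring. }
  assert (Hc : c = 0).
  { assert (Hk1 : k < 1) by (unfold k; rewrite <- Rinv_1; apply Rinv_lt_contravar; lra).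
    assert (HR4 : 1 < Rr ^ 4) by (apply Rlt_pow_R1; [lra | auto]).
    assert (Hk4 : k ^ 4 < 1) by (apply pow_lt_1_compat; [lra | auto]).
    assert (c ^ 2 * (Rr ^ 4 - k ^ 4) <= 0) by nra.
    destruct (Req_dec c 0) as [Hc | Hc]; [exact Hc | exfalso].
    assert (0 < c ^ 2 * (Rr ^ 4 - k ^ 4)) by (apply Rmult_lt_0_compat; [apply pow2_gt_0, Hc | lra]).
    lra. }
  subst c. split; [nra | reflexivity].
Qed.

Theorem mainTheorem15 (Rr a b c d : R) :
  1 < Rr ->
  a * d - b * c = 1 ->
  (forall e e' : R, (e = 1 \/ e = -1) -> (e' = 1 \/ e' = -1) ->
     Rabs (a * Rr + e' * b + e * c + e * e' * d * / Rr)
       < Rabs (Rr + e * e' * / Rr)) ->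
  ~ (b = 0 /\ c = 0) ->
  let h := mkM2 a b c d in
  meets_transversely (fun t => mmul h (Pm' Rr 1 t)) (SQ (ell Rr) (ell_pos Rr)) \/
  meets_transversely (fun t => mmul h (Pm' Rr (-1) t)) (SQ (ell Rr) (ell_pos Rr)) \/
  meets_transversely (fun t => mmul (minv (Pm Rr 1 t)) h) (SQinv (ell' Rr) (ell'_pos Rr)) \/
  meets_transversely (fun t => mmul (minv (Pm Rr (-1) t)) h) (SQinv (ell' Rr) (ell'_pos Rr)).
Proof.
  intros HR Hdet HQ Hbc h.
  destruct (stem_form_sign_change Rr h HR Hbc) as [e [[-> | ->] [Hin | Hout]]].
  - left. apply meets_SQ_along_Pm'; auto.
  - right; right; left. apply meets_SQinv_along_Pm; auto.
  - right; left. apply meets_SQ_along_Pm'; auto.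
  - right; right; right. apply meets_SQinv_along_Pm; auto.
Qed.
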